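(* Fix a positive integer $m$. Then, as a function of $n$ (with $n\to\infty$), the domination number satisfies $\gamma(\mathcal{SR}(m,n))=\Theta(n^{m-2})$.
   Context: For positive integers $m,n$, the simplicial rook graph $\mathcal{SR}(m,n)$ is the graph whose vertices are the vectors $(a_1,\dots,a_m)\in\mathbb{N}^m$ (nonnegative integer coordinates) with $a_1+\cdots+a_m=n$, two vertices being adjacent if and only if their vectors differ in exactly two coordinates. $\gamma(G)$ denotes the domination number of a graph $G$: the minimum size of a set $D$ of vertices such that every vertex is in $D$ or adjacent to a vertex of $D$. *)

From mathcomp Require Import all_boot.
Set Implicit Arguments. Unset Strict Implicit. Unset Printing Implicit Defensive.

(* Ambient finite type: functions 'I_m -> {0,...,n}; a vertex of SR(m,n) is
   such a vector whose coordinates sum to n (every nonnegative integer vector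
   with coordinate sum n has all coordinates <= n, so this is all of them). *)
Definition sr_vec (m n : nat) := {ffun 'I_m -> 'I_n.+1}.

Definition sr_vertices (m n : nat) : {set sr_vec m n} :=
  [set a : sr_vec m n | \sum_(i < m) (a i : nat) == n].

Definition sr_adj (m n : nat) (a b : sr_vec m n) : bool :=
  #|[set i : 'I_m | a i != b i]| == 2.

Definition sr_dominating (m n : nat) (D : {set sr_vec m n}) : bool :=
  (D \subset sr_vertices m n) &&
  [forall v in sr_vertices m n, (v \in D) || [exists d in D, sr_adj d v]].

(* domination number: minimum size of a dominating set
   (the full vertex set is dominating, so the default value is attained) *)
Definition sr_gamma (m n : nat) : nat :=
  \big[minn/#|sr_vertices m n|]_(D : {set sr_vec m n} | sr_dominating D) #|D|.

(* Upper bound: the vertices with first coordinate 0 dominate, since any other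
   vertex is adjacent to the one obtained by moving its first coordinate onto
   the second; this set has at most (n+1)^(m-2) elements, as a vertex in it is
   determined by its last m-2 coordinates.
   Lower bound: a vertex and its neighbours agree outside two coordinates and
   have the same sum, so they are determined by those two positions and one
   value, giving closed neighbourhoods of size at most m^2 (n+1).  The vertex
   set contains all vectors whose last m-1 coordinates are at most n/(m-1)
   (the first coordinate takes up the rest of the sum), hence has at least
   (n/(m-1))^(m-1) elements, and a dominating set needs at least that many
   divided by m^2 (n+1). *)
From HB Require Import structures.
From mathcomp Require Import all_boot zify.

Set Implicit Arguments.
Unset Strict Implicit.
Unset Printing Implicit Defensive.

(* Lets [bigD1] split \big[minn/x] although [minn] has no neutral element. *)
HB.instance Definition _ := SemiGroup.isComLaw.Build nat minn minnA minnC.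

Lemma geq_bigmin_cond (I : finType) (P : pred I) (F : I -> nat) x j :
  P j -> \big[minn/x]_(i | P i) F i <= F j.
Proof. by move=> Pj; rewrite (bigD1 j) //= geq_minl. Qed.

Lemma leq_card_bigcup (I T : finType) (P : pred I) (F : I -> {set T}) :
  #|\bigcup_(i | P i) F i| <= \sum_(i | P i) #|F i|.
Proof.
apply: (big_ind2 (fun (X : {set T}) s => #|X| <= s)) => [|X1 s1 X2 s2 h1 h2|//].
  by rewrite cards0.
exact: leq_trans (leq_card_setU X1 X2) (leq_add h1 h2).
Qed.

Lemma leq_card_cover (T : finType) (V D : {set T}) (N : T -> {set T}) k :
  V \subset \bigcup_(d in D) N d -> (forall d, d \in D -> #|N d| <= k) ->
  #|V| <= #|D| * k.
Proof.
move=> /subset_leq_card VN Nk; apply: leq_trans VN _.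
apply: leq_trans (leq_card_bigcup _ N) _.
by rewrite -sum_nat_const leq_sum.
Qed.

Lemma eq_ffun_sum_except (I : finType) p (f g : {ffun I -> 'I_p}) j :
  \sum_i (f i : nat) = \sum_i (g i : nat) ->
  (forall i, i != j -> f i = g i) -> f = g.
Proof.
move=> fg_sum fg; apply/ffunP => i; have [->|/fg //] := eqVneq i j.
move: fg_sum; rewrite (bigD1 j) //= [in RHS](bigD1 j) //=.
by rewrite (eq_bigr (fun i => g i : nat)) => [/addIn/val_inj|k /fg ->].
Qed.

Section SimplicialRook.

Variables m n : nat.

Local Notation V := (sr_vertices m n).

Lemma sr_dominating_vertices : sr_dominating V.
Proof. by rewrite /sr_dominating subxx; apply/forall_inP => v ->. Qed.

Lemma sr_gammaP :
  exists2 D : {set sr_vec m n}, sr_dominating D & sr_gamma m n = #|D|.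
Proof.
pose attained g := exists2 D : {set sr_vec m n}, sr_dominating D & g = #|D|.
apply: (big_ind attained).
- by exists V; first exact: sr_dominating_vertices.
- by move=> x y hx hy; rewrite /minn; case: ltnP.
- by move=> D domD; exists D.
Qed.

Lemma sr_gamma_min (D : {set sr_vec m n}) :
  sr_dominating D -> sr_gamma m n <= #|D|.
Proof. exact: geq_bigmin_cond. Qed.

Definition sr_nbhd (d : sr_vec m n) : {set sr_vec m n} :=
  [set v in V | (v == d) || sr_adj d v].

Lemma sr_dominating_cover (D : {set sr_vec m n}) :
  sr_dominating D -> V \subset \bigcup_(d in D) sr_nbhd d.
Proof.
case/andP=> _ /forall_inP domD; apply/subsetP => v vV.
case/orP: (domD v vV) => [vD|/exists_inP[d dD dv]].
  by apply/bigcupP; exists v; rewrite // inE vV eqxx.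
by apply/bigcupP; exists d; rewrite // inE vV dv orbT.
Qed.

Definition sr_agree_off (i j : 'I_m) (d : sr_vec m n) : {set sr_vec m n} :=
  [set v in V | [forall l, (l != i) && (l != j) ==> (v l == d l)]].

Lemma card_sr_agree_off i j d : #|sr_agree_off i j d| <= n.+1.
Proof.
apply: leq_trans (@leq_card_in _ _ (fun v : sr_vec m n => v i) _ _) _;
  last by rewrite card_ord.
move=> v w; rewrite !inE => /andP[vV /forallP vd] /andP[wV /forallP wd] vw_i.
apply: (eq_ffun_sum_except (j := j)); first by rewrite (eqP vV) (eqP wV).
move=> l lj; have [->//|li] := eqVneq l i.
by move: (vd l) (wd l); rewrite li lj /= => /eqP-> /eqP->.
Qed.

Lemma sr_nbhd_sub_agree_off (i0 : 'I_m) d :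
  sr_nbhd d \subset \bigcup_(p : 'I_m * 'I_m) sr_agree_off p.1 p.2 d.
Proof.
apply/subsetP => v; rewrite inE => /andP[vV /orP[/eqP vd|/cards2P[i [j [_ dv]]]]].
  apply/bigcupP; exists (i0, i0); rewrite // inE vV.
  by apply/forallP => l; rewrite vd eqxx implybT.
apply/bigcupP; exists (i, j); rewrite // inE vV.
apply/forallP => l; apply/implyP => /andP[li lj].
have: l \notin [set i; j] by rewrite !inE negb_or li lj.
by rewrite -dv inE negbK eq_sym.
Qed.

Lemma card_sr_nbhd (i0 : 'I_m) d : #|sr_nbhd d| <= m * m * n.+1.
Proof.
apply: leq_trans (subset_leq_card (sr_nbhd_sub_agree_off i0 d)) _.
apply: leq_trans (leq_card_bigcup _ _) _.
apply: (@leq_trans (\sum_(p : 'I_m * 'I_m) n.+1)).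
  by apply: leq_sum => p _; apply: card_sr_agree_off.
by rewrite sum_nat_const card_prod card_ord.
Qed.

Lemma card_sr_vertices_dominating (i0 : 'I_m) (D : {set sr_vec m n}) :
  sr_dominating D -> #|V| <= #|D| * (m * m * n.+1).
Proof.
move=> domD; apply: leq_card_cover (sr_dominating_cover domD) _.
by move=> d _; apply: card_sr_nbhd.
Qed.

Lemma sr_adj_move_coord (i j : 'I_m) (v : sr_vec m n) : i != j -> v \in V ->
  v i != ord0 -> exists2 d, d \in V & (d i == ord0) && sr_adj d v.
Proof.
move=> ij vV vi0.
have sumV : \sum_l (v l : nat) = v i + v j + \sum_(l | (l != i) && (l != j)) v l.
  by rewrite (bigD1 i) // (bigD1 j) /= 1?eq_sym // addnA.
have sum_n : \sum_l (v l : nat) = n by move: vV; rewrite inE => /eqP.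
have vij_n : v i + v j <= n by rewrite -[X in _ <= X]sum_n sumV leq_addr.
pose d : sr_vec m n := [ffun l =>
  if l == i then ord0 else if l == j then inord (v i + v j) else v l].
have di : d i = ord0 by rewrite ffunE eqxx.
have dj : d j = v i + v j :> nat by rewrite ffunE eq_sym (negbTE ij) eqxx inordK.
have dl l : (l != i) && (l != j) -> d l = v l.
  by rewrite ffunE => /andP[/negbTE-> /negbTE->].
exists d.
  rewrite inE (bigD1 i) // (bigD1 j) 1?eq_sym // di dj /=.
  rewrite (eq_bigr (fun l => v l : nat)) => [|l /dl -> //].
  by rewrite addnA -sumV sum_n.
have card_ij : #|[set i; j]| = 2 by rewrite cards2 ij.
rewrite di eqxx /sr_adj -card_ij; apply/eqP/eq_card => l.
rewrite !inE; have [->|li] := eqVneq l i.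
  by rewrite di eq_sym.
have [->|lj] /= := eqVneq l j; last by rewrite dl ?li ?lj // eqxx.
by rewrite -val_eqE /= dj addnC -{2}[v j : nat]addn0 eqn_add2l.
Qed.

End SimplicialRook.

Section AtLeastTwoCoordinates.

Variables k n : nat.

Local Notation V := (sr_vertices k.+2 n).

Definition sr_first_zero : {set sr_vec k.+2 n} := [set v in V | v ord0 == ord0].

Lemma sr_dominating_first_zero : sr_dominating sr_first_zero.
Proof.
apply/andP; split; first by apply/subsetP => v; rewrite inE => /andP[].
apply/forall_inP => v vV; rewrite inE vV /=.
have [//|v0] := eqVneq (v ord0) ord0.
have [d dV /andP[d0 dv]] := sr_adj_move_coord (neq_lift ord0 ord0) vV v0.
by apply/exists_inP; exists d; rewrite // inE dV.
Qed.

Lemma card_sr_first_zero : #|sr_first_zero| <= n.+1 ^ k.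
Proof.
pose tail (v : sr_vec k.+2 n) : {ffun 'I_k -> 'I_n.+1} :=
  [ffun i => v (lift ord0 (lift ord0 i))].
apply: leq_trans (@leq_card_in _ _ tail _ _) _;
  last by rewrite card_ffun !card_ord.
move=> v w; rewrite !inE => /andP[vV /eqP v0] /andP[wV /eqP w0] /ffunP vw.
apply: (eq_ffun_sum_except (j := lift ord0 ord0)).
  by rewrite (eqP vV) (eqP wV).
move=> l; case: (unliftP ord0 l) => [l' ->|->]; last by rewrite v0 w0.
case: (unliftP ord0 l') => [l'' -> _|->]; last by rewrite eqxx.
by have := vw l''; rewrite !ffunE.
Qed.

Lemma sr_gamma_leq : sr_gamma k.+2 n <= n.+1 ^ k.
Proof.
exact: leq_trans (sr_gamma_min sr_dominating_first_zero) card_sr_first_zero.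
Qed.

Lemma card_sr_vertices_geq : (n %/ k.+1).+1 ^ k.+1 <= #|V|.
Proof.
set q := n %/ k.+1.
have small (f : {ffun 'I_k.+1 -> 'I_q.+1}) i : f i <= n.
  by apply: leq_trans (leq_div n k.+1); rewrite -ltnS.
have sum_small (f : {ffun 'I_k.+1 -> 'I_q.+1}) : \sum_i (f i : nat) <= n.
  apply: (@leq_trans (\sum_(i < k.+1) q)).
    by apply: leq_sum => i _; rewrite -ltnS.
  by rewrite sum_nat_const card_ord mulnC leq_divM.
pose g (f : {ffun 'I_k.+1 -> 'I_q.+1}) : sr_vec k.+2 n := [ffun l =>
  if unlift ord0 l is Some i then inord (f i) else inord (n - \sum_i (f i : nat))].
have g_lift f i : g f (lift ord0 i) = f i :> nat.
  by rewrite ffunE liftK inordK // ltnS small.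
have g_inj : injective g.
  move=> f1 f2 /ffunP g12; apply/ffunP => i; apply/val_inj => /=.
  by rewrite -g_lift g12 g_lift.
have card_dom : #|{ffun 'I_k.+1 -> 'I_q.+1}| = q.+1 ^ k.+1.
  by rewrite card_ffun !card_ord.
rewrite -card_dom -(card_imset _ g_inj).
apply/subset_leq_card/subsetP => _ /imsetP[f _ ->].
rewrite inE big_ord_recl (eq_bigr _ (fun i _ => g_lift f i)).
by rewrite ffunE unlift_none inordK ?ltnS ?leq_subr // subnK ?sum_small.
Qed.

Lemma card_sr_dominating_geq (D : {set sr_vec k.+2 n}) : 0 < n ->
  sr_dominating D -> n ^ k <= 2 * k.+1 ^ k.+1 * (k.+2 * k.+2) * #|D|.
Proof.
move=> n_gt0 domD.
have V_lower :=
  leq_trans card_sr_vertices_geq (card_sr_vertices_dominating ord0 domD).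
have n_ceil : n ^ k.+1 <= (n %/ k.+1).+1 ^ k.+1 * k.+1 ^ k.+1.
  by rewrite -expnMn leq_exp2r // ltnW // ltn_ceil.
rewrite -(leq_pmul2l n_gt0) -expnS; apply: leq_trans n_ceil _.
apply: leq_trans (leq_mul V_lower (leqnn _)) _.
nia.
Qed.

End AtLeastTwoCoordinates.

Theorem theorem2 (m : nat) (hm : 2 <= m) :
  exists (c C N : nat), 0 < c /\ 0 < C /\
    forall n : nat, N <= n ->
      n ^ (m - 2) <= c * sr_gamma m n /\ sr_gamma m n <= C * n ^ (m - 2).
Proof.
case: m hm => [|[|k]] // _; rewrite subn2 /=.
exists (2 * k.+1 ^ k.+1 * (k.+2 * k.+2)), (2 ^ k), 1.
do 2![split; first by rewrite ?muln_gt0 expn_gt0].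
move=> n n_gt0; split.
  by have [D domD ->] := sr_gammaP k.+2 n; apply: card_sr_dominating_geq.
apply: leq_trans (sr_gamma_leq k n) _.
by rewrite -expnMn; case: k => // k; rewrite leq_exp2r //; lia.
Qed.
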